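(* Let $D$ be a finite distributive lattice. Then $D$ is fully chain-representable if and only if $D$ is planar and $D$ has at most one join-reducible coatom.
   Context: For a finite lattice $L$, $J(L)$ is the set of nonzero join-irreducible elements and $J^+(L)=J(L)\cup\{0_L,1_L\}$. A $J(D)$-colored chain is a triple $(C,\sigma,D)$ where $C$ is a finite chain, $D$ is a finite distributive lattice and $\sigma\colon\mathrm{Prime}(C)\to J(D)$ is a surjective map from the set $\mathrm{Prime}(C)$ of prime intervals (covering pairs $[x,y]$, $x\prec y$) of $C$ onto $J(D)$. For an interval $I$ of $C$, the element represented by $I$ is $\mathrm{rep}(I)=\bigvee_{\mathfrak p\in\mathrm{Prime}(I)}\sigma(\mathfrak p)$ (join in $D$; the empty join is $0_D$), and $\mathrm{Rep}(C,\sigma,D)=\{\mathrm{rep}(I): I \text{ an interval of } C\}$. For $Q\subseteq D$, the inclusion $Q\subseteq D$ is chain-representable if $Q=\mathrm{Rep}(C,\sigma,D)$ for some $J(D)$-colored chain $(C,\sigma,D)$ ($C$ need not be a subchain of $D$). $D$ is fully chain-representable if for every $Q$ with $J^+(D)\subseteq Q\subseteq D$ the inclusion $Q\subseteq D$ is chain-representable. A lattice is planar if it is finite and has a planar Hasse diagram. *)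

From Stdlib Require Import Reals.
From HB Require Import structures.
From mathcomp Require Import all_boot all_order.
Set Implicit Arguments.
Unset Strict Implicit.
Unset Printing Implicit Defensive.
Import Order.TTheory.
Local Open Scope order_scope.

Section Lat.
Context {disp : Order.disp_t} {L : finTBLatticeType disp}.

Definition join_irr (x : L) : bool :=
  (x != \bot) && [forall y : L, forall z : L, (x == y `|` z) ==> ((x == y) || (x == z))].

Definition Jset : {set L} := [set x | join_irr x].

Definition Jplus : {set L} := \bot |: (\top |: Jset).

Definition join_red (x : L) : bool :=
  [exists y : L, exists z : L, [&& y < x, z < x & x == y `|` z]].

Definition covers (x y : L) : bool :=
  (x < y) && [forall z : L, ~~ ((x < z) && (z < y))].

Definition coatom (c : L) : bool := covers c \top.

(** The finite chain C is modelled (up to isomorphism) as 0 < 1 < ... < n;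
    its prime intervals are [k, k+1], indexed by k : 'I_n. *)
(** element represented by the interval [i, j] (i <= j <= n) *)
Definition rep (n : nat) (sigma : 'I_n -> L) (i j : nat) : L :=
  \join_(k < n | (i <= k)%N && (k < j)%N) sigma k.

Definition Rep (n : nat) (sigma : 'I_n -> L) : {set L} :=
  [set x | [exists i : 'I_n.+1, exists j : 'I_n.+1,
              ((i <= j)%N) && (x == rep sigma i j)]].

Definition coloring (n : nat) (sigma : 'I_n -> L) : Prop :=
  (forall k, sigma k \in Jset) /\ (forall x, x \in Jset -> exists k, sigma k = x).

Definition chain_representable (Q : {set L}) : Prop :=
  exists (n : nat) (sigma : 'I_n -> L), coloring sigma /\ Q = Rep sigma.

Definition fully_chain_representable : Prop :=
  forall Q : {set L}, Jplus \subset Q -> chain_representable Q.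

Definition segpt (P Q : R * R) (t : R) : R * R :=
  (Rplus (Rmult (Rminus R1 t) (fst P)) (Rmult t (fst Q)),
   Rplus (Rmult (Rminus R1 t) (snd P)) (Rmult t (snd Q))).

Definition in01 (t : R) : Prop := Rle R0 t /\ Rle t R1.

(** A planar (straight-line, upward) drawing of the Hasse diagram. *)
Definition planar_drawing (p : L -> R * R) : Prop :=
  (forall x y, p x = p y -> x = y) /\
  (forall x y, x < y -> Rlt (snd (p x)) (snd (p y))) /\
  (forall v a b t, covers a b -> in01 t -> p v = segpt (p a) (p b) t ->
     v = a \/ v = b) /\
  (forall a b c d t s, covers a b -> covers c d -> in01 t -> in01 s ->
     segpt (p a) (p b) t = segpt (p c) (p d) s ->
     (a = c /\ b = d) \/
     exists v, (v = a \/ v = b) /\ (v = c \/ v = d) /\ segpt (p a) (p b) t = p v).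

Definition planar : Prop := exists p : L -> R * R, planar_drawing p.

End Lat.

From Stdlib Require Import Reals Lra Lia.
From HB Require Import structures.
From mathcomp Require Import all_boot all_order zify.
Import Order.TTheory.
Local Open Scope order_scope.

(* Both conditions are governed by the width of the poset J(D) of join-irreducibles.

   Planarity is equivalent to width at most two. Three pairwise incomparable join-irreducibles
   a, b, c, joined to the join e0 of their lower covers, span a cover-preserving cube; in an
   upward drawing, two of its square paths from e0 to its top would cross, by the intermediate
   value theorem. Conversely, by Dilworth's theorem J(D) is the union of two chains, and counting
   the join-irreducibles of each chain below x embeds D in the grid N^2 with covers as unit steps.

   Full chain-representability forces width two: an interval of minimal length representing
   a | b | c would split it as the join of an element of J^+(D) and a color, and a | b | c is no
   such join. It also forbids two join-reducible coatoms c1, c2: a longest interval representing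
   c1 & c2 is not the whole chain, which represents the top, and each one-step extension of it
   represents c1 & c2, c1 or c2.

   Conversely, width two makes every element the join of two join-irreducibles, and at most one
   join-reducible coatom yields a join-irreducible s with j <= s or s | j = 1 for all j in J(D).
   Interleaving s with pairs of colors whose joins are the elements of Q gives a chain whose
   intervals represent s, 1, or an element of Q. *)

Section FiniteLattice.
Context {disp : Order.disp_t} {D : finTBDistrLatticeType disp}.
Implicit Types (x y z e j c : D).

Lemma lt_ind (P : D -> Prop) :
  (forall x, (forall y, y < x -> P y) -> P x) -> forall x, P x.
Proof.
move=> IH x; have [m] := ubnP #|[set y : D | y < x]|.
elim: m x => // m IHm x Hx; apply: IH => y yx; apply: IHm.
suff /proper_card : [set z | z < y] \proper [set z : D | z < x].
  by move=> h; apply: leq_trans h _; rewrite -ltnS.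
apply/properP; split; last by exists y; rewrite !inE ?yx ?ltxx.
by apply/subsetP => z; rewrite !inE => /lt_trans; apply.
Qed.

Lemma ex_maximal (P : pred D) x0 :
  P x0 -> exists m, [/\ P m, x0 <= m & forall y, P y -> ~~ (m < y)].
Proof.
move=> Px0; pose size_below y := #|[set z : D | z <= y]|.
have Px0' : P x0 && (x0 <= x0) by rewrite Px0 lexx.
case: (@arg_maxnP _ x0 (fun y => P y && (x0 <= y)) size_below Px0').
move=> m /andP [Pm x0m] m_max; exists m; split => // y Py; apply/negP => my.
have /proper_card : [set z | z <= m] \proper [set z : D | z <= y].
  apply/properP; split; last by exists y; rewrite !inE ?lexx ?(lt_geF my).
  by apply/subsetP => z; rewrite !inE => /le_trans; apply; apply: ltW.
have := m_max y; rewrite Py (le_trans x0m (ltW my)) /size_below => /(_ isT) ym.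
by move=> /leq_trans/(_ ym); rewrite ltnn.
Qed.

Lemma join_irrP j :
  reflect (j != \bot /\ forall y z, j = y `|` z -> j = y \/ j = z) (join_irr j).
Proof.
apply: (iffP andP) => [[j0 /forallP Hj]|[j0 Hj]]; split => //.
  move=> y z E; have /forallP/(_ z)/implyP := Hj y.
  by rewrite E eqxx => /(_ isT) /orP [/eqP|/eqP]; [left|right].
apply/forallP => y; apply/forallP => z; apply/implyP => /eqP /Hj [->|->].
  by rewrite eqxx.
by rewrite eqxx orbT.
Qed.

Lemma join_irr_neq0 {j} : join_irr j -> j != \bot.
Proof. by case/join_irrP. Qed.

Lemma join_irr_leU {j x y} : join_irr j -> j <= x `|` y -> j <= x \/ j <= y.
Proof.
case/join_irrP => _ Hj /meet_idPl; rewrite meetUr => /esym /Hj [E|E].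
  by left; apply/meet_idPl; rewrite -E.
by right; apply/meet_idPl; rewrite -E.
Qed.

Lemma join_irr_nleU {j x y} :
  join_irr j -> ~~ (j <= x) -> ~~ (j <= y) -> ~~ (j <= x `|` y).
Proof. by move=> Hj jx jy; apply/negP => /(join_irr_leU Hj) []; apply/negP. Qed.

Lemma join_irr_le_joins {I : finType} {P : pred I} {F : I -> D} {j} :
  join_irr j -> j <= \join_(i | P i) F i -> exists2 i, P i & j <= F i.
Proof.
move=> Hj; elim/big_rec: _ => [|i x Pi IH]; first by rewrite lex0 (negbTE (join_irr_neq0 Hj)).
by case/(join_irr_leU Hj) => [jF|/IH //]; exists i.
Qed.

Lemma join_irr_not_red c : c != \bot -> ~~ join_red c -> join_irr c.
Proof.
move=> c0 c_irr; apply/join_irrP; split => // y z E.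
case: (eqVneq c y) => [|cy]; first by left.
case: (eqVneq c z) => [|cz]; first by right.
exfalso; move/negP: c_irr; apply; apply/existsP; exists y; apply/existsP; exists z.
by rewrite -E eqxx !lt_neqAle (eq_sym y) (eq_sym z) cy cz E leUl leUr.
Qed.

Lemma join_irrN {x} : x != \bot -> ~~ join_irr x ->
  exists y z, [/\ y < x, z < x & x = y `|` z].
Proof.
rewrite /join_irr => -> /= /forallPn [y /forallPn [z]].
rewrite negb_imply negb_or => /andP [/eqP E /andP [xy xz]]; exists y, z.
by rewrite !lt_neqAle (eq_sym y) (eq_sym z) xy xz E leUl leUr.
Qed.

Lemma join_red_neq0 {c} : join_red c -> c != \bot.
Proof.
by case/existsP => y /existsP [z /and3P [yc _ _]]; apply: contraTneq yc => ->; rewrite ltx0.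
Qed.

Lemma join_red_not_irr {c} : join_red c -> ~~ join_irr c.
Proof.
case/existsP => y /existsP [z /and3P [yc zc /eqP E]].
apply/negP => /join_irrP [_ /(_ _ _ E) [E'|E']]; [move: yc | move: zc];
  by rewrite -E' ltxx.
Qed.

(* For a join-irreducible [x], [join_lt x] is its unique lower cover. *)
Definition join_lt x : D := \join_(y | y < x) y.

Lemma le_join_lt x y : y < x -> y <= join_lt x.
Proof. exact: (@joins_sup _ _ _ y (fun y => y < x)). Qed.

Lemma join_lt_le x : join_lt x <= x.
Proof. by apply/joinsP => y /ltW. Qed.

Lemma join_lt_lt {j} : join_irr j -> join_lt j < j.
Proof.
move=> Hj; rewrite lt_neqAle join_lt_le andbT; apply/eqP => E.
have /(join_irr_le_joins Hj) [y yj jy] : j <= join_lt j by rewrite E.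
by move: (lt_le_trans yj jy); rewrite ltxx.
Qed.

Lemma covers_lt {x y} : covers x y -> x < y.
Proof. by case/andP. Qed.

Lemma covers_joinU e x :
  join_irr x -> ~~ (x <= e) -> join_lt x <= e -> covers e (e `|` x).
Proof.
move=> Hx xe lxe; apply/andP; split.
  by rewrite lt_neqAle leUl andbT; apply: contra xe => /eqP ->; rewrite leUr.
apply/forallP => z; apply/negP => /andP [ez zex].
have E : z = e `|` (z `&` x).
  by rewrite -{1}(meet_idPl (ltW zex)) meetUr (meet_idPr (ltW ez)).
case: (boolP (x <= z)) => xz.
  by move: zex; rewrite lt_leAnge leUx (ltW ez) xz andbF.
have /le_join_lt zxl : z `&` x < x.
  by rewrite lt_neqAle leIr andbT; apply: contra xz => /eqP <-; rewrite leIl.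
by move: ez; rewrite lt_leAnge {2}E leUx lexx (le_trans zxl lxe) andbF.
Qed.

Definition Jbelow x : {set D} := [set j | join_irr j && (j <= x)].

Lemma Jbelow_le {x y} : x <= y -> Jbelow x \subset Jbelow y.
Proof. by move=> xy; apply/subsetP => j; rewrite !inE => /andP [-> /le_trans]; apply. Qed.

Lemma join_Jbelow x : x = \join_(j in Jbelow x) j.
Proof.
elim/lt_ind: x => x IH; apply/le_anti; rewrite andbC; apply/andP; split.
  by apply/joinsP => j; rewrite inE => /andP [].
case: (eqVneq x \bot) => [->|x0]; first exact: le0x.
case: (boolP (join_irr x)) => Hx.
  by apply: (@joins_sup _ _ _ x (fun j => j \in Jbelow x)); rewrite inE Hx lexx.
have [y [z [yx zx E]]] := join_irrN x0 Hx.
rewrite {1}E leUx (IH y yx) (IH z zx).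
by rewrite !le_joins // Jbelow_le // ltW.
Qed.

Lemma Jbelow_inj : injective Jbelow.
Proof. by move=> x y E; rewrite (join_Jbelow x) (join_Jbelow y) E. Qed.

Lemma Jbelow_proper {x y} : x < y -> Jbelow x \proper Jbelow y.
Proof.
move=> xy; rewrite properEneq Jbelow_le ?ltW // andbT.
by apply: contraTneq xy => /Jbelow_inj ->; rewrite ltxx.
Qed.

Lemma covers_Jbelow a b : covers a b -> exists j, [/\ join_irr j, ~~ (j <= a), j <= b &
  forall k, join_irr k -> (k <= b) = (k <= a) || (k == j)].
Proof.
move=> ab; have ltab := covers_lt ab.
case/properP: (Jbelow_proper ltab) => _ [j]; rewrite !inE => /andP [Hj jb].
rewrite Hj /= => ja.
have Eb k : join_irr k -> k <= b -> ~~ (k <= a) -> a `|` k = b.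
  move=> Hk kb ka; move: ab => /andP [_ /forallP /(_ (a `|` k))].
  rewrite lt_leAnge leUl /= leUidr (negbTE ka) /= lt_neqAle leUx (ltW ltab) kb /= andbT negbK.
  by move=> /eqP.
exists j; split => // k Hk; apply/idP/idP => [kb|/orP [ka|/eqP -> //]]; last first.
  exact: le_trans ka (ltW ltab).
case: (boolP (k <= a)) => //= ka.
have kj : k <= j.
  by move: kb; rewrite -(Eb j Hj jb ja) => /(join_irr_leU Hk) []; rewrite ?(negbTE ka).
have jk : j <= k.
  by move: jb; rewrite -(Eb k Hk kb ka) => /(join_irr_leU Hj) []; rewrite ?(negbTE ja).
by rewrite eq_le kj jk.
Qed.

Lemma coatom_lt {c} : coatom c -> c < \top.
Proof. by case/andP. Qed.

Lemma coatom_top {c y} : coatom c -> c < y -> y = \top.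
Proof.
move=> /andP [_ /forallP c_max] cy; apply/eqP; rewrite eq_le lex1 /=.
by move: (c_max y); rewrite cy /= lt_neqAle lex1 andbT negbK => /eqP ->.
Qed.

Lemma coatom_joinU {c x} : coatom c -> ~~ (x <= c) -> c `|` x = \top.
Proof.
move=> Cc xc; apply: (coatom_top Cc).
by rewrite lt_leAnge leUl leUx lexx.
Qed.

Lemma coatom_above {x} : x < \top -> exists2 c, coatom c & x <= c.
Proof.
case/(ex_maximal (fun y => y < \top)) => c [ct xc c_max]; exists c => //.
rewrite /coatom /covers ct; apply/forallP => z; apply/negP => /andP [cz zt].
by move: (c_max z zt); rewrite cz.
Qed.

Definition chain (C : {set D}) : Prop :=
  forall x y, x \in C -> y \in C -> (x <= y) || (y <= x).

Definition width_le2 (S : {set D}) : Prop :=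
  forall a b c, a \in S -> b \in S -> c \in S ->
  [|| a <= b, b <= a, a <= c, c <= a, b <= c | c <= b].

Lemma JsetE j : (j \in Jset) = join_irr j.
Proof. by rewrite inE. Qed.

Lemma join3_join2 {a b c} : width_le2 Jset ->
  join_irr a -> join_irr b -> join_irr c ->
  exists u v, [/\ join_irr u, join_irr v & a `|` b `|` c = u `|` v].
Proof.
move=> W Ja Jb Jc; have := W a b c; rewrite !JsetE => /(_ Ja Jb Jc).
case/or4P => [ab|ba|ac|/or3P [ca|bc|cb]].
- by exists b, c; rewrite (join_r ab).
- by exists a, c; rewrite (join_l ba).
- by exists c, b; rewrite joinAC (join_r ac).
- by exists a, b; rewrite joinAC (join_l ca).
- by exists a, c; rewrite -joinA (join_r bc).
- by exists a, b; rewrite -joinA (join_l cb).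
Qed.

Lemma join_irr_join2 x : width_le2 Jset -> x != \bot ->
  exists u v, [/\ join_irr u, join_irr v & x = u `|` v].
Proof.
move=> W; elim/lt_ind: x => x IH x0.
case: (boolP (join_irr x)) => Jx; first by exists x, x; rewrite joinxx.
have [y [z [yx zx E]]] := join_irrN x0 Jx.
have y0 : y != \bot by apply: contraTneq zx => y0; rewrite E y0 join0x ltxx.
have z0 : z != \bot by apply: contraTneq yx => z0; rewrite E z0 joinx0 ltxx.
have [a1 [b1 [Ja1 Jb1 Ey]]] := IH y yx y0.
have [a2 [b2 [Ja2 Jb2 Ez]]] := IH z zx z0.
have [u [v [Ju Jv Euv]]] := join3_join2 W Ja1 Jb1 Ja2.
have [u' [v' [Ju' Jv' Euv']]] := join3_join2 W Ju Jv Jb2.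
by exists u', v'; rewrite E Ey Ez joinA Euv Euv'.
Qed.

Definition separating s : Prop := forall j, join_irr j -> j <= s \/ s `|` j = \top.

Lemma separating_joinU {s} y : separating s -> s `|` y = s \/ s `|` y = \top.
Proof.
move=> sep; case: (boolP (Jbelow y \subset [set j | j <= s])) => [/subsetP sub|].
  left; apply/join_l; rewrite (join_Jbelow y); apply/joinsP => j /sub.
  by rewrite inE.
case/subsetPn => j; rewrite !inE => /andP [Jj jy] js.
have [js'|sj] := sep j Jj; first by rewrite js' in js.
by right; apply/eqP; rewrite eq_le lex1 -sj leUx leUl (le_trans jy (leUr _ _)).
Qed.

Lemma separating_exists : (\bot : D) != \top ->
  (forall c1 c2, coatom c1 -> join_red c1 -> coatom c2 -> join_red c2 -> c1 = c2) ->
  exists2 s, join_irr s & separating s.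
Proof.
move=> nt coat_uniq; case: (boolP (join_irr (\top : D))) => Jt.
  by exists \top => // j _; left; exact: lex1.
have t0 : (\top : D) != \bot by rewrite eq_sym.
have [y [z [yt zt E]]] := join_irrN t0 Jt.
have [cy Cy ycy] := coatom_above yt; have [cz Cz zcz] := coatom_above zt.
have cyz : cy != cz.
  apply: contraTneq (coatom_lt Cy) => Eyz.
  by rewrite lt_leAnge lex1 /= negbK E leUx ycy Eyz zcz.
have [c [Cc Rc yzc]] : exists c, [/\ coatom c, ~~ join_red c & (y <= c) || (z <= c)].
  case: (boolP (join_red cy)) => Ry; last by exists cy; rewrite Cy Ry ycy.
  case: (boolP (join_red cz)) => Rz; last by exists cz; rewrite Cz Rz zcz orbT.
  by move: cyz; rewrite (coat_uniq _ _ Cy Ry Cz Rz) eqxx.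
have c0 : c != \bot.
  apply: contraTneq yzc => ->; rewrite !lex0; apply/norP; split.
    by apply: contraTneq zt => y0; rewrite E y0 join0x ltxx.
  by apply: contraTneq yt => z0; rewrite E z0 joinx0 ltxx.
exists c; first exact: join_irr_not_red.
move=> j Jj; case: (boolP (j <= c)) => jc; first by left.
by right; apply: coatom_joinU.
Qed.

End FiniteLattice.

Section ColoredChain.
Context {disp : Order.disp_t} {D : finTBDistrLatticeType disp}.
Context {n : nat} (sigma : 'I_n -> D).

(* [sigma] extended by [\bot] to all of [nat], to avoid ordinal bookkeeping. *)
Definition color (k : nat) : D := oapp sigma \bot (insub k).

Lemma colorE (k : 'I_n) : color k = sigma k.
Proof. by rewrite /color valK. Qed.

Lemma repE i j : rep sigma i j = \join_(k < n | (i <= k < j)%N) color k.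
Proof. by apply: eq_bigr => k _; rewrite colorE. Qed.

Lemma rep_le i j u :
  (forall k, (i <= k < j)%N -> (k < n)%N -> color k <= u) -> rep sigma i j <= u.
Proof. by move=> H; rewrite repE; apply/joinsP => k /H; apply. Qed.

Lemma le_rep i j k : (i <= k < j)%N -> (k < n)%N -> color k <= rep sigma i j.
Proof.
move=> ikj kn; rewrite repE (_ : k = Ordinal kn) //.
exact: (@joins_sup _ _ _ (Ordinal kn) (fun k : 'I_n => (i <= k < j)%N)).
Qed.

Lemma rep_nil i : rep sigma i i = \bot.
Proof.
apply/eqP; rewrite -lex0; apply: rep_le => k /andP [ik /(leq_ltn_trans ik)].
by rewrite ltnn.
Qed.

Lemma rep_mono i j i' j' : (i' <= i)%N -> (j <= j')%N -> rep sigma i j <= rep sigma i' j'.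
Proof.
move=> i'i jj'; apply: rep_le => k /andP [ik kj]; apply: le_rep.
by rewrite (leq_trans i'i ik) (leq_trans kj jj').
Qed.

Lemma rep_stepr i j : (i <= j)%N -> (j < n)%N -> rep sigma i j.+1 = rep sigma i j `|` color j.
Proof.
move=> ij jn; apply/le_anti/andP; split.
  apply: rep_le => k /andP [ik]; rewrite ltnS leq_eqVlt => /orP [/eqP -> _|kj kn].
    exact: leUr.
  by apply: le_trans (leUl _ _); apply: le_rep; rewrite ?ik.
by rewrite leUx rep_mono //=; apply: le_rep; rewrite ?ij ?ltnSn.
Qed.

Lemma rep_stepl i j : (i < j)%N -> (j <= n)%N -> rep sigma i j = color i `|` rep sigma i.+1 j.
Proof.
move=> ij jn; apply/le_anti/andP; split.
  apply: rep_le => k /andP []; rewrite leq_eqVlt => /orP [/eqP <- _ _|ik kj kn].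
    exact: leUl.
  by apply: le_trans (leUr _ _); apply: le_rep; rewrite ?ik.
by rewrite leUx rep_mono // le_rep ?leqnn ?ij // (leq_trans ij jn).
Qed.

Lemma RepP x :
  reflect (exists i j, [/\ (i <= j)%N, (j <= n)%N & x = rep sigma i j]) (x \in Rep sigma).
Proof.
apply: (iffP idP).
  rewrite inE => /existsP [i /existsP [j /andP [ij /eqP ->]]].
  by exists i, j; split; rewrite // -ltnS.
move=> [i [j [ij jn ->]]]; rewrite inE; apply/existsP.
have ilt : (i < n.+1)%N by rewrite ltnS (leq_trans ij jn).
have jlt : (j < n.+1)%N by rewrite ltnS.
by exists (Ordinal ilt); apply/existsP; exists (Ordinal jlt); rewrite /= ij eqxx.
Qed.

Lemma Rep_le_full {x} : x \in Rep sigma -> x <= rep sigma 0 n.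
Proof. by case/RepP => i [j [_ jn ->]]; apply: rep_mono. Qed.

Let represented x (L : nat) :=
  [exists i : 'I_n.+1, (i + L <= n)%N && (x == rep sigma i (i + L))].

Let representedP x : x \in Rep sigma -> exists L, represented x L.
Proof.
case/RepP => i [j [ij jn ->]]; exists (j - i)%N; apply/existsP.
have ilt : (i < n.+1)%N by rewrite ltnS (leq_trans ij jn).
by exists (Ordinal ilt); rewrite /= subnKC // jn eqxx.
Qed.

Lemma Rep_shortest {x} : x \in Rep sigma -> x != \bot ->
  exists w (k : 'I_n), [/\ w \in Rep sigma, w != x & x = w `|` sigma k].
Proof.
move=> /representedP ex x0; case: (ex_minnP ex) => L /existsP [i /andP [iL /eqP Ex]] L_min.
case: L iL Ex L_min => [|L] iL Ex L_min; first by rewrite Ex addn0 rep_nil eqxx in x0.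
have kn : (i + L < n)%N by rewrite -addnS.
exists (rep sigma i (i + L)), (Ordinal kn); split.
- by apply/RepP; exists i, (i + L); split; [exact: leq_addr | exact: ltnW |].
- apply/eqP => Ew; suff : (L < L)%N by rewrite ltnn.
  by apply: L_min; apply/existsP; exists i; rewrite -Ew eqxx (ltnW kn).
- by rewrite -colorE Ex addnS rep_stepr ?leq_addr.
Qed.

Lemma Rep_longest {x} : x \in Rep sigma -> x != rep sigma 0 n ->
  exists k : 'I_n, ~~ (sigma k <= x) /\ x `|` sigma k \in Rep sigma.
Proof.
move=> /representedP ex x_full.
have bound L : represented x L -> (L <= n)%N.
  by case/existsP => i /andP [iL _]; apply: leq_trans iL; apply: leq_addl.
case: (ex_maxnP ex bound) => L /existsP [i /andP [iL /eqP Ex]] L_max.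
have [i' [k [kn i'L Eext]]] : exists i' k,
    [/\ (k < n)%N, (i' + L.+1 <= n)%N & rep sigma i' (i' + L.+1) = x `|` color k].
  case: (ltnP (i + L) n) => iLn.
    by exists i, (i + L); rewrite addnS iLn rep_stepr ?leq_addr // Ex.
  have [i0|i_pos] := posnP i.
    have Ln : L = n by lia.
    by move: x_full; rewrite Ex i0 Ln eqxx.
  exists i.-1, i.-1; split; [lia | lia |].
  rewrite (_ : i.-1 + L.+1 = i + L)%N; last lia.
  rewrite rep_stepl; [|lia|lia].
  by rewrite prednK // -Ex joinC.
exists (Ordinal kn); rewrite -colorE /=; split.
  apply/negP => kx; suff : (L < L)%N by rewrite ltnn.
  apply: L_max; apply/existsP; have i'lt : (i' < n.+1)%N by lia.
  by exists (Ordinal i'lt); rewrite /= i'L Eext (join_l kx) eqxx.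
by apply/RepP; exists i', (i' + L.+1); split; [exact: leq_addr | exact: i'L |].
Qed.

End ColoredChain.

Section NecessaryConditions.
Context {disp : Order.disp_t} {D : finTBDistrLatticeType disp}.
Implicit Types (x y w a b c : D).

Lemma in_Jplus x : (x \in Jplus) = [|| x == \bot, x == \top | join_irr x].
Proof. by rewrite !inE. Qed.

Lemma join3_neq_join2 {a b c} u v :
  join_irr a -> join_irr b -> join_irr c ->
  ~~ [|| a <= b, b <= a, a <= c, c <= a, b <= c | c <= b] ->
  (u == \bot) || join_irr u -> (v == \bot) || join_irr v -> a `|` b `|` c != u `|` v.
Proof.
move=> Ja Jb Jc; rewrite !negb_or => /and5P [nab nba nac nca /andP [nbc ncb]] Ju Jv.
(* Each of [a], [b], [c] lies below [u] or [v], but neither [u] nor [v] lies above two of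
   them, since it lies below one of them. *)
have at_most_one w : (w == \bot) || join_irr w -> w <= a `|` b `|` c ->
    ((a <= w)%O + (b <= w)%O + (c <= w)%O <= 1)%N.
  case/orP => [/eqP -> _|Jw].
    by rewrite !lex0 !(negbTE (join_irr_neq0 _)).
  have nle y z : ~~ (y <= z) -> w <= z -> (y <= w) = false.
    by move=> yz wz; apply: contraNF yz => /le_trans; apply.
  case/(join_irr_leU Jw) => [/(join_irr_leU Jw) [wa|wb]|wc].
  - by rewrite (nle _ _ nba wa) (nle _ _ nca wa); case: (a <= w).
  - by rewrite (nle _ _ nab wb) (nle _ _ ncb wb); case: (b <= w).
  - by rewrite (nle _ _ nac wc) (nle _ _ nbc wc); case: (c <= w).
apply/eqP => E.
have le_uv y : join_irr y -> y <= a `|` b `|` c -> (y <= u) || (y <= v).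
  by rewrite E => Jy /(join_irr_leU Jy) [] ->; rewrite ?orbT.
have aabc : a <= a `|` b `|` c by rewrite -joinA leUl.
have babc : b <= a `|` b `|` c by rewrite joinAC leUr.
have := le_uv a Ja aabc; have := le_uv b Jb babc; have := le_uv c Jc (leUr _ _).
have := at_most_one u Ju; have := at_most_one v Jv.
rewrite E leUl leUr => /(_ isT) + /(_ isT).
move: (a <= u) (b <= u) (c <= u) (a <= v) (b <= v) (c <= v) => ? ? ? ? ? ?.
clear; lia.
Qed.

Lemma fully_chain_representable_width :
  @fully_chain_representable disp D -> width_le2 (Jset : {set D}).
Proof.
move=> F a b c; rewrite !JsetE => Ja Jb Jc; apply/negPn/negP => inc.
set abc := a `|` b `|` c.
have [n [sigma [[colJ _] EQ]]] := F (Jplus :|: [set abc]) (subsetUl _ _).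
have abcR : abc \in Rep sigma by rewrite -EQ !inE eqxx orbT.
have abc0 : abc != \bot.
  apply: contra (join_irr_neq0 Ja); rewrite -!lex0 => /(le_trans _); apply.
  by rewrite /abc -joinA leUl.
have [w [k [wR wabc Eabc]]] := Rep_shortest sigma abcR abc0.
have Jk : join_irr (sigma k) by rewrite -JsetE.
move: wR; rewrite -EQ in_setU in_Jplus in_set1 (negbTE wabc) orbF orbCA.
case/orP => [/eqP wt|Jw]; first by move: wabc; rewrite Eabc wt join1x eqxx.
have := join3_neq_join2 w (sigma k) Ja Jb Jc inc Jw.
by rewrite Jk orbT -Eabc eqxx => /(_ isT).
Qed.

Lemma coatom_le_eq {c c'} : coatom c -> coatom c' -> c <= c' -> c = c'.
Proof.
move=> C C'; rewrite le_eqVlt => /orP [/eqP //|/(coatom_top C) ct'].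
by move: (coatom_lt C'); rewrite ct' ltxx.
Qed.

Lemma meet_coatom_joinU {c c' x} : coatom c' -> x <= c -> ~~ (x <= c') -> (c `&` c') `|` x = c.
Proof. by move=> C' xc xc'; rewrite joinIl (join_l xc) (coatom_joinU C' xc') meetx1. Qed.

Lemma join_red_coatom_notin {c c'} : coatom c -> join_red c -> coatom c' -> c != c' ->
  c \notin Jplus :|: [set c `&` c'].
Proof.
move=> C R C' cc'; rewrite in_setU in_Jplus in_set1 (negbTE (join_red_neq0 R)).
rewrite (negbTE (join_red_not_irr R)) (lt_eqF (coatom_lt C)) /=.
apply: contra cc' => /eqP Ec; apply/eqP/(coatom_le_eq C C').
by rewrite Ec leIr.
Qed.

Lemma fully_chain_representable_coatoms : @fully_chain_representable disp D ->
  forall c1 c2 : D, coatom c1 -> join_red c1 -> coatom c2 -> join_red c2 -> c1 = c2.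
Proof.
move=> F c1 c2 C1 R1 C2 R2; apply/eqP/negPn/negP => c12.
set d := c1 `&` c2.
have [n [sigma [[colJ _] EQ]]] := F (Jplus :|: [set d]) (subsetUl _ _).
have dR : d \in Rep sigma by rewrite -EQ !inE eqxx orbT.
have full : rep sigma 0 n = \top.
  by apply/eqP; rewrite eq_le lex1 (Rep_le_full sigma) // -EQ !inE eqxx !orbT.
have d_full : d != rep sigma 0 n.
  by rewrite full lt_eqF // (le_lt_trans (leIl _ _) (coatom_lt C1)).
have [k [kd dkR]] := Rep_longest sigma dR d_full.
have Jk : join_irr (sigma k) by rewrite -JsetE.
have c1c2 : c1 `|` c2 = \top.
  apply: (coatom_joinU C1); apply: contra c12 => c21.
  by rewrite (coatom_le_eq C2 C1 c21).
have : sigma k <= c1 `|` c2 by rewrite c1c2 lex1.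
case/(join_irr_leU Jk) => kc; move: dkR; rewrite -EQ.
- have kc2 : ~~ (sigma k <= c2) by apply: contra kd; rewrite lexI kc.
  by rewrite meet_coatom_joinU //; apply/negP/join_red_coatom_notin.
- have kc1 : ~~ (sigma k <= c1) by apply: contra kd; rewrite lexI kc andbT.
  rewrite /d meetC meet_coatom_joinU //; apply/negP/join_red_coatom_notin => //.
  by rewrite eq_sym.
Qed.

End NecessaryConditions.

Section Construction.
Context {disp : Order.disp_t} {D : finTBDistrLatticeType disp}.
Context {s : D} {Q : {set D}}.
Hypotheses (Js : join_irr s) (sep : separating s).
Hypotheses (W : width_le2 (Jset : {set D})) (JQ : Jplus \subset Q).

Let irrQ {x} : join_irr x -> x \in Q.
Proof. by move=> Jx; apply: (subsetP JQ); rewrite in_Jplus Jx !orbT. Qed.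

Let botQ : \bot \in Q.
Proof. by apply: (subsetP JQ); rewrite in_Jplus eqxx. Qed.

Let topQ : \top \in Q.
Proof. by apply: (subsetP JQ); rewrite in_Jplus eqxx orbT. Qed.

(* A decomposition of [q] as a join of two join-irreducibles; [(s, s)] for [q = \bot]. *)
Definition join2_pair (q : D) : D * D :=
  if [pick uv : D * D | [&& join_irr uv.1, join_irr uv.2 & q == uv.1 `|` uv.2]] is Some uv
  then uv else (s, s).

Lemma join2_pair_irr q : join_irr (join2_pair q).1 /\ join_irr (join2_pair q).2.
Proof. by rewrite /join2_pair; case: pickP => [uv /and3P [Ju Jv _]|_]. Qed.

Lemma join2_pairE {q} : q != \bot -> q = (join2_pair q).1 `|` (join2_pair q).2.
Proof.
move=> q0; rewrite /join2_pair; case: pickP => [uv /and3P [_ _ /eqP //]|none].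
have [u [v [Ju Jv Eq]]] := join_irr_join2 q W q0.
by move: (none (u, v)); rewrite /= Ju Jv Eq eqxx.
Qed.

Lemma join2_pair_in q : q \in Q -> (join2_pair q).1 `|` (join2_pair q).2 \in Q.
Proof.
case: (eqVneq q \bot) => [->|q0]; last by rewrite -join2_pairE.
rewrite /join2_pair; case: pickP => [uv /and3P [_ _ /eqP <-] //|_ _].
by rewrite joinxx irrQ.
Qed.

Let qs := enum Q.
Let m := size qs.

(* The chain colored [s, q_0.1, q_0.2, s, q_1.1, q_1.2, s, ...], with [(q_t.1, q_t.2)] the
   [join2_pair] of the [t]-th element of [Q]. *)
Definition block_color (k : nat) : D :=
  if (k %% 3 == 0)%N then s
  else if (k %% 3 == 1)%N then (join2_pair (nth \bot qs (k %/ 3))).1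
  else (join2_pair (nth \bot qs (k %/ 3))).2.

Lemma block_color_irr k : join_irr (block_color k).
Proof. by rewrite /block_color; case: ifP => // _; case: ifP => _; apply join2_pair_irr. Qed.

Lemma block_color1 t : block_color (3 * t + 1) = (join2_pair (nth \bot qs t)).1.
Proof.
rewrite /block_color (_ : (3 * t + 1) %% 3 = 1)%N; last lia.
by rewrite (_ : (3 * t + 1) %/ 3 = t)%N; last lia.
Qed.

Lemma block_color2 t : block_color (3 * t + 2) = (join2_pair (nth \bot qs t)).2.
Proof.
rewrite /block_color (_ : (3 * t + 2) %% 3 = 2)%N; last lia.
by rewrite (_ : (3 * t + 2) %/ 3 = t)%N; last lia.
Qed.

Let n := (3 * m).+1.

Definition block_coloring (k : 'I_n) : D := block_color k.

Let colorE k : (k < n)%N -> color block_coloring k = block_color k.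
Proof. by move=> kn; rewrite (_ : k = Ordinal kn) // colorE. Qed.

Let rep1 i : (i < n)%N -> rep block_coloring i i.+1 = block_color i.
Proof. by move=> i_n; rewrite rep_stepr // rep_nil join0x colorE. Qed.

Let rep2 i : (i.+1 < n)%N ->
  rep block_coloring i i.+2 = block_color i `|` block_color i.+1.
Proof. by move=> i_n; rewrite rep_stepr // rep1 ?colorE //; lia. Qed.

Let index_lt {x} : x \in Q -> (index x qs < m)%N.
Proof. by rewrite index_mem mem_enum. Qed.

Let nth_indexQ {x} : x \in Q -> nth \bot qs (index x qs) = x.
Proof. by move=> xQ; rewrite nth_index // mem_enum. Qed.

Lemma block_coloring_coloring : coloring block_coloring.
Proof.
split=> [k|x]; first by rewrite JsetE block_color_irr.
rewrite JsetE => /[dup] Jx /join_irrP [x0 x_irr].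
have xQ := irrQ Jx; have t_m := index_lt xQ; set t := index x qs in t_m *.
case: (x_irr _ _ (join2_pairE x0)) => Ex.
  have k_n : (3 * t + 1 < n)%N by rewrite /n; lia.
  by exists (Ordinal k_n); rewrite /block_coloring /= block_color1 nth_indexQ.
have k_n : (3 * t + 2 < n)%N by rewrite /n; lia.
by exists (Ordinal k_n); rewrite /block_coloring /= block_color2 nth_indexQ.
Qed.

Lemma sub_Rep_block_coloring : Q \subset Rep block_coloring.
Proof.
apply/subsetP => x xQ; apply/RepP; case: (eqVneq x \bot) => [->|x0].
  by exists 0%N, 0%N; rewrite rep_nil.
have t_m := index_lt xQ; set t := index x qs in t_m *.
exists (3 * t + 1)%N, (3 * t + 3)%N; split; [lia | rewrite /n; lia |].
rewrite (_ : 3 * t + 3 = (3 * t + 1).+2)%N ?rep2; [|rewrite /n; lia|lia].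
rewrite (_ : (3 * t + 1).+1 = 3 * t + 2)%N; last lia.
by rewrite block_color1 block_color2 nth_indexQ // -join2_pairE.
Qed.

Lemma Rep_block_coloring_sub : Rep block_coloring \subset Q.
Proof.
apply/subsetP => _ /RepP [i [j [ij jn ->]]].
(* An interval containing a color [s] represents [s] or [\top]; any other interval lies within
   one pair of colors [q_t.1, q_t.2]. *)
case: (boolP [exists k : 'I_n, [&& i <= k, k < j & k %% 3 == 0]%N]).
  case/existsP => k /and3P [ik kj k0].
  have sr : s <= rep block_coloring i j.
    have := le_rep block_coloring i j k.
    by rewrite ik kj ltn_ord colorE // /block_color k0; apply.
  have [E|E] := separating_joinU (rep block_coloring i j) sep;
    by rewrite -(join_r sr) E ?topQ ?irrQ.
move/existsPn => no_s.
have not0 k : (i <= k < j)%N -> (k %% 3 != 0)%N.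
  move=> /andP [ik kj]; have k_n : (k < n)%N by lia.
  by have := no_s (Ordinal k_n); rewrite /= ik kj.
case: (ltnP i j) => [ij'|ji]; last by rewrite (_ : j = i) ?rep_nil //; lia.
case: (ltnP i.+1 j) => [ij2|ji1].
  have n0 := not0 i; have n1 := not0 i.+1; have n2 := not0 i.+2.
  have Ej : j = i.+2 by lia.
  have t_m : (i %/ 3 < m)%N by rewrite /n in jn; lia.
  rewrite Ej rep2; last lia.
  rewrite (_ : i = 3 * (i %/ 3) + 1)%N; last lia.
  rewrite (_ : (3 * (i %/ 3) + 1).+1 = 3 * (i %/ 3) + 2)%N; last lia.
  by rewrite block_color1 block_color2 join2_pair_in // -mem_enum mem_nth.
by rewrite (_ : j = i.+1) ?rep1 ?irrQ ?block_color_irr //; lia.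
Qed.

Lemma chain_representable_separating : chain_representable Q.
Proof.
exists n, block_coloring; split; first exact: block_coloring_coloring.
by apply/eqP; rewrite eqEsubset sub_Rep_block_coloring Rep_block_coloring_sub.
Qed.

End Construction.

Section Geometry.
Local Open Scope R_scope.

(* [Rmin b (Rmax a y)], written with [Rabs] so that continuity follows from that of [Rabs]. *)
Definition clamp (a b y : R) : R :=
  (b + (a + y + Rabs (y - a)) / 2 - Rabs ((a + y + Rabs (y - a)) / 2 - b)) / 2.

Lemma continuity_clamp a b : continuity (clamp a b).
Proof.
move=> x; rewrite /clamp /Rdiv.
repeat first [ exact: (derivable_continuous _ derivable_id)
             | by apply: continuity_pt_const
             | apply: continuity_pt_plus | apply: continuity_pt_minus
             | apply: continuity_pt_mult | apply: continuity_pt_opp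
             | apply: (continuity_pt_comp _ Rabs); last exact: Rcontinuity_abs ].
Qed.

Lemma clamp_id a b y : a <= y <= b -> clamp a b y = y.
Proof.
move=> [ay yb]; rewrite /clamp (Rabs_pos_eq (y - a)); last lra.
by rewrite (Rabs_left1 ((a + y + (y - a)) / 2 - b)); lra.
Qed.

Lemma clamp_lo a b y : y <= a -> a <= b -> clamp a b y = a.
Proof.
move=> ya ab; rewrite /clamp (Rabs_left1 (y - a)); last lra.
by rewrite (Rabs_left1 ((a + y + - (y - a)) / 2 - b)); lra.
Qed.

Lemma clamp_hi a b y : a <= b -> b <= y -> clamp a b y = b.
Proof.
move=> ab yb; rewrite /clamp (Rabs_pos_eq (y - a)); last lra.
by rewrite (Rabs_pos_eq ((a + y + (y - a)) / 2 - b)); lra.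
Qed.

(* Inverse slope [dx/dy]: cover edges point upwards, so paths are graphs over the height. *)
Definition slope (P Q : R * R) : R := (fst Q - fst P) / (snd Q - snd P).

(* Abscissa, at height [y], of the polygonal path [P0 P1 P2 P3] of increasing heights. *)
Definition path_x (P0 P1 P2 P3 : R * R) (y : R) : R :=
  fst P0 + slope P0 P1 * (clamp (snd P0) (snd P1) y - snd P0)
         + slope P1 P2 * (clamp (snd P1) (snd P2) y - snd P1)
         + slope P2 P3 * (clamp (snd P2) (snd P3) y - snd P2).

Lemma continuity_path_x P0 P1 P2 P3 : continuity (path_x P0 P1 P2 P3).
Proof.
move=> x; rewrite /path_x.
repeat first [ exact: continuity_clamp | by apply: continuity_pt_const
             | apply: continuity_pt_plus | apply: continuity_pt_minus
             | apply: continuity_pt_mult ].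
Qed.

Lemma segpt_height (A B : R * R) y : snd A < snd B -> snd A <= y <= snd B ->
  exists2 t, in01 t & (fst A + slope A B * (y - snd A), y) = segpt A B t.
Proof.
move=> AB Ay; exists ((y - snd A) / (snd B - snd A)); last first.
  by rewrite /segpt /slope; f_equal => /=; field; lra.
split; first by apply: Rmult_le_pos; [lra | apply/Rlt_le/Rinv_0_lt_compat; lra].
apply: (Rmult_le_reg_r (snd B - snd A)); first lra.
by rewrite /Rdiv Rmult_assoc Rinv_l; lra.
Qed.

Section IncreasingPath.
Context {P0 P1 P2 P3 : R * R}.
Hypotheses (h01 : snd P0 < snd P1) (h12 : snd P1 < snd P2) (h23 : snd P2 < snd P3).

Lemma path_x_seg1 y : snd P0 <= y <= snd P1 ->
  path_x P0 P1 P2 P3 y = fst P0 + slope P0 P1 * (y - snd P0).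
Proof.
move=> Hy; rewrite /path_x (clamp_id (snd P0)) ?(clamp_lo (snd P1)) ?(clamp_lo (snd P2)); lra.
Qed.

Lemma path_x_seg2 y : snd P1 <= y <= snd P2 ->
  path_x P0 P1 P2 P3 y = fst P1 + slope P1 P2 * (y - snd P1).
Proof.
move=> Hy; rewrite /path_x (clamp_hi (snd P0)) ?(clamp_id (snd P1)) ?(clamp_lo (snd P2)); try lra.
by rewrite /slope; field; lra.
Qed.

Lemma path_x_seg3 y : snd P2 <= y <= snd P3 ->
  path_x P0 P1 P2 P3 y = fst P2 + slope P2 P3 * (y - snd P2).
Proof.
move=> Hy; rewrite /path_x (clamp_hi (snd P0)) ?(clamp_hi (snd P1)) ?(clamp_id (snd P2)); try lra.
by rewrite /slope; field; lra.
Qed.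

Lemma path_x_on_path y : snd P0 <= y <= snd P3 ->
  [\/ exists2 t, in01 t & (path_x P0 P1 P2 P3 y, y) = segpt P0 P1 t,
      exists2 t, in01 t & (path_x P0 P1 P2 P3 y, y) = segpt P1 P2 t |
      exists2 t, in01 t & (path_x P0 P1 P2 P3 y, y) = segpt P2 P3 t].
Proof.
move=> Hy; case: (Rle_lt_dec y (snd P1)) => y1.
  by apply: Or31; rewrite path_x_seg1; [apply: segpt_height|]; lra.
case: (Rle_lt_dec y (snd P2)) => y2.
  by apply: Or32; rewrite path_x_seg2; [apply: segpt_height|]; lra.
by apply: Or33; rewrite path_x_seg3; [apply: segpt_height|]; lra.
Qed.

End IncreasingPath.

Lemma paths_cross {P0 P1 P2 P3 Q1 Q2 : R * R} :
  snd P0 < snd P1 -> snd P1 < snd P2 -> snd P2 < snd P3 ->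
  snd P0 < snd Q1 -> snd Q1 < snd Q2 -> snd Q2 < snd P3 ->
  slope P0 P1 <= slope P0 Q1 -> slope P2 P3 <= slope Q2 P3 ->
  exists y, snd P0 < y < snd P3 /\ path_x P0 P1 P2 P3 y = path_x P0 Q1 Q2 P3 y.
Proof.
move=> p01 p12 p23 q01 q12 q23 s0 s3.
set lo := Rmin (snd P1) (snd Q1); set hi := Rmax (snd P2) (snd Q2).
have lo_P1 : lo <= snd P1 by apply: Rmin_l.
have lo_Q1 : lo <= snd Q1 by apply: Rmin_r.
have hi_P2 : snd P2 <= hi by apply: Rmax_l.
have hi_Q2 : snd Q2 <= hi by apply: Rmax_r.
have P0lo : snd P0 < lo by apply: Rmin_glb_lt.
have hiP3 : hi < snd P3 by apply: Rmax_lub_lt.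
pose g y := path_x P0 P1 P2 P3 y - path_x P0 Q1 Q2 P3 y.
have g_lo : g lo <= 0.
  rewrite /g !path_x_seg1; try lra.
  suff : (slope P0 P1 - slope P0 Q1) * (lo - snd P0) <= 0 by lra.
  nra.
have g_hi : 0 <= g hi.
  have end_x (A : R * R) : snd A < snd P3 ->
      fst A + slope A P3 * (hi - snd A) = fst P3 - slope A P3 * (snd P3 - hi).
    by move=> AP3; rewrite /slope; field; lra.
  rewrite /g !path_x_seg3 ?end_x; try lra.
  suff : 0 <= (slope Q2 P3 - slope P2 P3) * (snd P3 - hi) by lra.
  nra.
case: (Rle_lt_or_eq_dec _ _ g_lo) => [g_lo'|g0]; last first.
  by exists lo; split; [lra | rewrite /g in g0; lra].
case: (Rle_lt_or_eq_dec _ _ g_hi) => [g_hi'|g0]; last first.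
  by exists hi; split; [lra | rewrite /g in g0; lra].
have cg : continuity g by move=> y; apply: continuity_pt_minus; apply: continuity_path_x.
have [y [y_in gy]] := IVT g lo hi cg ltac:(lra) g_lo' g_hi'.
by exists y; split; [lra | rewrite /g in gy; lra].
Qed.

End Geometry.

Section PlanarCube.
Context {disp : Order.disp_t} {D : finTBDistrLatticeType disp}.
Variables (p : D -> R * R) (Hp : planar_drawing p).

Section TwoPaths.
Variables (z0 x1 x2 z1 y1 y2 : D).
Hypotheses (cx1 : covers z0 x1) (cx2 : covers x1 x2) (cx3 : covers x2 z1).
Hypotheses (cy1 : covers z0 y1) (cy2 : covers y1 y2) (cy3 : covers y2 z1).
Hypotheses (n11 : x1 <> y1) (n12 : x1 <> y2) (n21 : x2 <> y1) (n22 : x2 <> y2).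

Let edge_x a b := [\/ a = z0 /\ b = x1, a = x1 /\ b = x2 | a = x2 /\ b = z1].
Let edge_y c d := [\/ c = z0 /\ d = y1, c = y1 /\ d = y2 | c = y2 /\ d = z1].

Let inner_x v : v = x1 \/ v = x2 -> ~ [\/ v = z0, v = y1, v = y2 | v = z1].
Proof.
have l1 := covers_lt cx1; have l2 := covers_lt cx2; have l3 := covers_lt cx3.
by move=> [] -> [] // E; [move: l1 | move: (lt_trans l2 l3) | move: (lt_trans l1 l2) | move: l3];
  rewrite E ltxx.
Qed.

Lemma two_paths_disjoint a b c d t s : edge_x a b -> edge_y c d -> in01 t -> in01 s ->
  segpt (p a) (p b) t = segpt (p c) (p d) s ->
  Rlt (snd (p z0)) (snd (segpt (p a) (p b) t)) -> Rlt (snd (segpt (p a) (p b) t)) (snd (p z1)) ->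
  False.
Proof.
move=> ab cd t01 s01 E above below; case: Hp => [_ [_ [_ edges]]].
have cab : covers a b by case: ab => [] [-> ->].
have ccd : covers c d by case: cd => [] [-> ->].
have on_y v : v = c \/ v = d -> [\/ v = z0, v = y1, v = y2 | v = z1].
  by case: cd => [] [-> ->] [] ->; constructor.
case: (edges a b c d t s cab ccd t01 s01 E) => [[ac bd]|[v [va [vc Ev]]]].
  have [w w_x w_cd] : exists2 w, w = x1 \/ w = x2 & w = c \/ w = d.
    by case: ab => [] [Ea Eb]; [exists b | exists a | exists a]; auto.
  exact: (inner_x w w_x (on_y w w_cd)).
have : v = z0 \/ v = z1 \/ v = x1 \/ v = x2 by case: ab => [] [Ea Eb]; case: va => ->; auto.
case=> [v0|[v1|v_x]]; last exact: (inner_x v v_x (on_y v vc)).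
  by move: above; rewrite Ev v0; lra.
by move: below; rewrite Ev v1; lra.
Qed.

Lemma planar_paths_ordered :
  Rle (slope (p z0) (p x1)) (slope (p z0) (p y1)) ->
  Rlt (slope (p y2) (p z1)) (slope (p x2) (p z1)).
Proof.
move=> s0; case: (Rlt_le_dec (slope (p y2) (p z1)) (slope (p x2) (p z1))) => // s3.
case: Hp => [_ [up _]]; exfalso.
have hx1 := up _ _ (covers_lt cx1); have hx2 := up _ _ (covers_lt cx2).
have hx3 := up _ _ (covers_lt cx3); have hy1 := up _ _ (covers_lt cy1).
have hy2 := up _ _ (covers_lt cy2); have hy3 := up _ _ (covers_lt cy3).
have [y [y_in Ey]] := paths_cross hx1 hx2 hx3 hy1 hy2 hy3 s0 s3.
have y_in' : Rle (snd (p z0)) y /\ Rle y (snd (p z1)) by lra.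
have heights a b t : (path_x (p z0) (p x1) (p x2) (p z1) y, y) = segpt (p a) (p b) t ->
    Rlt (snd (p z0)) (snd (segpt (p a) (p b) t)) /\ Rlt (snd (segpt (p a) (p b) t)) (snd (p z1)).
  by move=> <- /=; lra.
case: (path_x_on_path hx1 hx2 hx3 y y_in') => [] [t t01 Et];
case: (path_x_on_path hy1 hy2 hy3 y y_in') => [] [s s01 Es];
  rewrite -Ey in Es; case: (heights _ _ _ Et) => above below;
  apply: (two_paths_disjoint _ _ _ _ t s _ _ t01 s01 (etrans (esym Et) Es) above below);
  by constructor.
Qed.

End TwoPaths.

Definition fresh_over (e0 x y z : D) : Prop :=
  [/\ join_irr x, join_lt x <= e0 & ~~ (x <= e0 `|` y `|` z)].

Lemma fresh_overC {e0 x y z} : fresh_over e0 x y z -> fresh_over e0 x z y.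
Proof. by case=> Jx xe0 nx; split => //; rewrite joinAC. Qed.

Lemma fresh_over_nle {e0 x y z e} : fresh_over e0 x y z -> e <= e0 `|` y `|` z -> ~~ (x <= e).
Proof. by case=> _ _ nx eyz; apply: contra nx => /le_trans; apply. Qed.

Lemma fresh_over_covers {e0 x y z e} : fresh_over e0 x y z ->
  e0 <= e -> e <= e0 `|` y `|` z -> covers e (e `|` x).
Proof.
move=> fx e0e eyz; have [Jx xe0 _] := fx.
by apply: covers_joinU => //; [exact: fresh_over_nle fx eyz | exact: le_trans xe0 e0e].
Qed.

Lemma neq_witness {w u v : D} : w <= u -> ~~ (w <= v) -> u <> v.
Proof. by move=> wu wv E; move: wv; rewrite -E wu. Qed.

(* The paths [e0, e0 | x, e0 | x | z, e1] and [e0, e0 | y, e0 | x | y, e1] of the cube. *)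
Lemma cube_slopes {e0 x y z} :
  fresh_over e0 x y z -> fresh_over e0 y x z -> fresh_over e0 z x y ->
  Rle (slope (p e0) (p (e0 `|` x))) (slope (p e0) (p (e0 `|` y))) ->
  Rlt (slope (p (e0 `|` x `|` y)) (p (e0 `|` x `|` y `|` z)))
      (slope (p (e0 `|` x `|` z)) (p (e0 `|` x `|` y `|` z))).
Proof.
move=> fx fy fz.
have le0 u v : e0 <= e0 `|` u `|` v by rewrite -joinA leUl.
have xz_top : e0 `|` x `|` z `|` y = e0 `|` x `|` y `|` z by rewrite joinAC.
have yx : e0 `|` y `|` x = e0 `|` x `|` y by rewrite joinAC.
have x_xz : x <= e0 `|` x `|` z by rewrite joinAC leUr.
have y_xy : y <= e0 `|` x `|` y by rewrite leUr.
apply: planar_paths_ordered.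
- exact: fresh_over_covers fx (lexx _) (le0 _ _).
- exact: fresh_over_covers fz (leUl _ _) (leUl _ _).
- by rewrite -xz_top; apply: fresh_over_covers fy (le0 _ _) (lexx _).
- exact: fresh_over_covers fy (lexx _) (le0 _ _).
- by rewrite -yx; apply: fresh_over_covers fx (leUl _ _) (leUl _ _).
- exact: fresh_over_covers fz (le0 _ _) (lexx _).
- exact: neq_witness (leUr _ _) (fresh_over_nle fx (leUl _ _)).
- exact/nesym/(neq_witness y_xy)/(fresh_over_nle fy (leUl _ _)).
- exact: neq_witness x_xz (fresh_over_nle fx (leUl _ _)).
- exact/nesym/(neq_witness y_xy)/(fresh_over_nle fy (lexx _)).
Qed.

Lemma cube_min_slope {e0 x y z} :
  fresh_over e0 x y z -> fresh_over e0 y x z -> fresh_over e0 z x y ->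
  Rle (slope (p e0) (p (e0 `|` x))) (slope (p e0) (p (e0 `|` y))) ->
  Rle (slope (p e0) (p (e0 `|` x))) (slope (p e0) (p (e0 `|` z))) -> False.
Proof.
move=> fx fy fz sxy sxz.
have := cube_slopes fx fy fz sxy; have := cube_slopes (fresh_overC fx) fz fy sxz.
by rewrite (joinAC (e0 `|` x) z y); lra.
Qed.

Lemma planar_drawing_width : width_le2 (Jset : {set D}).
Proof.
move=> a b c; rewrite !JsetE => Ja Jb Jc; apply/negPn/negP.
rewrite !negb_or => /and5P [nab nba nac nca /andP [nbc ncb]].
set e0 := join_lt a `|` join_lt b `|` join_lt c.
have nle_lt u t : join_irr u -> u = t \/ ~~ (u <= t) -> ~~ (u <= join_lt t).
  move=> Ju [<-|ut]; first by rewrite (lt_geF (join_lt_lt Ju)).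
  by apply: contra ut => /le_trans; apply; apply: join_lt_le.
have fresh u v w : join_irr u -> join_lt u <= e0 -> ~~ (u <= v) -> ~~ (u <= w) ->
    u = a \/ ~~ (u <= a) -> u = b \/ ~~ (u <= b) -> u = c \/ ~~ (u <= c) -> fresh_over e0 u v w.
  move=> Ju ue0 uv uw ua ub uc; split => //.
  by rewrite /e0; repeat apply: (join_irr_nleU Ju) => //; apply: nle_lt.
have ae0 : join_lt a <= e0 by rewrite /e0 -joinA leUl.
have be0 : join_lt b <= e0 by rewrite /e0 joinAC leUr.
have ce0 : join_lt c <= e0 by rewrite /e0 leUr.
have fa := fresh a b c Ja ae0 nab nac (or_introl erefl) (or_intror nab) (or_intror nac).
have fb := fresh b a c Jb be0 nba nbc (or_intror nba) (or_introl erefl) (or_intror nbc).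
have fc := fresh c a b Jc ce0 nca ncb (or_intror nca) (or_intror ncb) (or_introl erefl).
pose sl u := slope (p e0) (p (e0 `|` u)).
case: (Rle_dec (sl a) (sl b)) => ab; case: (Rle_dec (sl a) (sl c)) => ac;
  case: (Rle_dec (sl b) (sl c)) => bc; rewrite /sl in ab ac bc.
all: first [ exact: cube_min_slope fa fb fc ab ac
           | by apply: (cube_min_slope fb fa (fresh_overC fc)); lra
           | by apply: (cube_min_slope fc (fresh_overC fa) (fresh_overC fb)); lra ].
Qed.

End PlanarCube.

Lemma planar_width {disp : Order.disp_t} {D : finTBDistrLatticeType disp} :
  @planar disp D -> width_le2 (Jset : {set D}).
Proof. by case=> p Hp; apply: planar_drawing_width Hp. Qed.

Section Dilworth2.
Context {disp : Order.disp_t} {D : finTBDistrLatticeType disp}.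
Implicit Types (S X Y : {set D}) (x y u v : D).

Lemma chain_max {X x y} : chain X -> x \in X -> y \in X -> ~~ (x < y) -> y <= x.
Proof.
move=> CX xX yX; case/orP: (CX x y xX yX) => // xy.
by rewrite lt_neqAle xy andbT negbK => /eqP ->.
Qed.

(* Galvin's proof of Dilworth's theorem, in the case of width two. *)
Section Galvin.
Context {S : {set D}} {m : D}.
Hypotheses (W : width_le2 S) (mS : m \in S) (m_max : forall y, y \in S -> ~~ (m < y)).

Let S' := S :\ m.
Let anti u v := [&& u \in S', v \in S', ~~ (u <= v) & ~~ (v <= u)].
Let T := [set u | [exists v, anti u v]].

Let antiT {u v} : anti u v -> u \in T /\ v \in T.
Proof.
move=> uv; rewrite !inE; split; apply/existsP; [by exists v | exists u].
by move: uv; rewrite /anti => /and4P [-> -> -> ->].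
Qed.

Section ChainCover.
Context {X Y : {set D}}.
Hypotheses (CX : chain X) (CY : chain Y) (ES : S' = X :|: Y).

Let anti_across {u v} : anti u v -> u \in X -> v \in Y.
Proof.
case/and4P => _ vS uv vu uX; move: vS; rewrite ES inE => /orP [vX|//].
by move: (CX u v uX vX); rewrite (negbTE uv) (negbTE vu).
Qed.

Lemma anti_meets {u v} : anti u v -> exists w, w \in T :&: X.
Proof.
move=> uv; case: (antiT uv) => uT vT.
have := uv; case/and4P => uS vS nuv nvu.
move: (uS); rewrite ES inE => /orP [uX|uY]; first by exists u; rewrite inE uT uX.
exists v; rewrite inE vT; move: (vS); rewrite ES inE => /orP [//|vY].
by move: (CY u v uY vY); rewrite (negbTE nuv) (negbTE nvu).
Qed.

Lemma top_anti_incomparable {x y} : x \in T :&: X ->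
  (forall w, w \in T :&: Y -> w <= y) -> ~~ (y <= x).
Proof.
rewrite inE => /andP [xT xX] y_max; apply/negP => yx.
move: xT; rewrite inE => /existsP [w xw]; have wY := anti_across xw xX.
case: (antiT xw) => _ wT; have wy := y_max w; rewrite inE wT wY in wy.
by case/and4P: xw => _ _ _ /negP []; apply: le_trans (wy isT) yx.
Qed.

Lemma chains_split_below {x} : x \in T :&: X ->
  (forall y, y \in T :&: X -> y <= x) -> x <= m ->
  exists C1 C2, [/\ chain C1, chain C2 & S = C1 :|: C2].
Proof.
(* Every 2-antichain of [S'] meets [X] in an element below [x], hence meets [K]. *)
move=> xTX x_max xm; set K := m |: [set z in X | z <= x].
have KS : K \subset S.
  apply/subsetP => z; rewrite !inE => /orP [/eqP -> //|/andP [zX _]].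
  have : z \in S' by rewrite ES inE zX.
  by rewrite inE => /andP [].
exists K, (S :\: K); split.
- move=> z1 z2; rewrite !inE.
  case/orP => [/eqP ->|/andP [z1X z1x]]; case/orP => [/eqP ->|/andP [z2X z2x]].
  + by rewrite lexx.
  + by rewrite (le_trans z2x xm) orbT.
  + by rewrite (le_trans z1x xm).
  + exact: CX.
- move=> u1 u2; rewrite !in_setD => /andP [u1K u1S] /andP [u2K u2S].
  apply/negPn/negP; rewrite negb_or => /andP [n12 n21].
  have mK : m \in K by rewrite !inE eqxx.
  have u1S' : u1 \in S' by rewrite !inE u1S andbT; apply: contraNneq u1K => ->.
  have u2S' : u2 \in S' by rewrite !inE u2S andbT; apply: contraNneq u2K => ->.
  have a12 : anti u1 u2 by rewrite /anti u1S' u2S' n12 n21.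
  have [u1T u2T] := antiT a12.
  have below_x u : u \in T -> u \in X -> u \notin K -> False.
    by move=> uT uX; rewrite !inE uX (x_max u) ?orbT // inE uT.
  move: (u1S'); rewrite ES inE => /orP [u1X|u1Y]; first by apply: (below_x u1).

  apply: (below_x u2) => //; move: (u2S'); rewrite ES inE => /orP [//|u2Y].
  by move: (CY u1 u2 u1Y u2Y); rewrite (negbTE n12) (negbTE n21).
- by apply/setP => z; rewrite in_setU in_setD; case: (boolP (z \in K)) => // /(subsetP KS).
Qed.

End ChainCover.

Lemma galvin_step {X Y} : chain X -> chain Y -> S' = X :|: Y ->
  exists C1 C2, [/\ chain C1, chain C2 & S = C1 :|: C2].
Proof.
move=> CX CY ES; have ES' : S' = Y :|: X by rewrite setUC.
case: (boolP (T == set0)) => [/eqP T0|].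
  exists S', [set m]; split.
  - move=> u v uS vS; apply/negPn/negP; rewrite negb_or => /andP [uv vu].
    by have [] := antiT (_ : anti u v); rewrite ?T0 ?inE // /anti uS vS uv vu.
  - by move=> u v; rewrite !inE => /eqP -> /eqP ->; rewrite lexx.
  - by rewrite setUC setD1K.
case/set0Pn => u; rewrite inE => /existsP [v uv].
have [a0 a0T] := anti_meets CY ES uv.
have [b0 b0T] := anti_meets CX ES' uv.
have [xA [xAT _ xA_top]] := @ex_maximal _ _ [pred y | y \in T :&: X] a0 a0T.
have [xB [xBT _ xB_top]] := @ex_maximal _ _ [pred y | y \in T :&: Y] b0 b0T.
have in_X Z z : z \in T :&: Z -> z \in Z by rewrite inE => /andP [].
have maxA y : y \in T :&: X -> y <= xA.
  by move=> yT; apply: (chain_max CX (in_X _ _ xAT) (in_X _ _ yT)); apply: xA_top.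
have maxB y : y \in T :&: Y -> y <= xB.
  by move=> yT; apply: (chain_max CY (in_X _ _ xBT) (in_X _ _ yT)); apply: xB_top.
have nBA := top_anti_incomparable CX ES xAT maxB.
have nAB := top_anti_incomparable CY ES' xBT maxA.
have in_S' Z Z' z : z \in T :&: Z -> S' = Z :|: Z' -> z \in S'.
  by move=> /in_X zZ ->; rewrite inE zZ.
have [xAm xAS] : xA != m /\ xA \in S by apply/andP; rewrite -in_setD1 (in_S' _ _ _ xAT ES).
have [xBm xBS] : xB != m /\ xB \in S by apply/andP; rewrite -in_setD1 (in_S' _ _ _ xBT ES').
have nle y : y \in S -> y != m -> ~~ (m <= y).
  by move=> yS ym; apply: contraNN (m_max y yS) => my; rewrite lt_neqAle eq_sym ym.
case/or4P: (W _ _ _ mS xAS xBS) => [|xAm'|mxB|/or3P [xBm'|AB|BA]].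
- by rewrite (negbTE (nle _ xAS xAm)).
- exact: (chains_split_below CX CY ES xAT maxA xAm').
- by rewrite (negbTE (nle _ xBS xBm)) in mxB.
- exact: (chains_split_below CY CX ES' xBT maxB xBm').
- by rewrite AB in nAB.
- by rewrite BA in nBA.
Qed.


End Galvin.

Lemma width_le2_chains (S : {set D}) : width_le2 S ->
  exists C1 C2, [/\ chain C1, chain C2 & S = C1 :|: C2].
Proof.
have [k] := ubnP #|S|; elim: k S => // k IH S Sk W.
case: (set_0Vmem S) => [->|[m0 m0S]].
  by exists set0, set0; split; rewrite ?setU0 // => x y; rewrite inE.
have [m [mS _ m_max]] := @ex_maximal _ _ [pred y | y \in S] m0 m0S.
rewrite /= in mS m_max.
have W' : width_le2 (S :\ m).
  by move=> a b c; rewrite !inE => /andP [_ aS] /andP [_ bS] /andP [_ cS]; apply: W.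
have Sk' : (#|S :\ m| < k)%N by move: Sk; rewrite (cardsD1 m S) mS.
have [X [Y [CX CY ES]]] := IH _ Sk' W'.
exact: (galvin_step W mS m_max CX CY ES).
Qed.

End Dilworth2.

Section Grid.
Local Open Scope R_scope.

Lemma INR_le_succ (m k : nat) : INR m <= INR k + 1 -> (m <= k.+1)%N.
Proof. by rewrite -S_INR => /INR_le; lia. Qed.

Lemma INR_shift01 {m k : nat} {t} : INR m = INR k + t -> in01 t ->
  (m = k /\ t = 0) \/ (m = k.+1 /\ t = 1).
Proof.
move=> E [t0 t1].
have mk : (m <= k.+1)%N by apply: INR_le_succ; lra.
have km : (k <= m)%N.
  have : INR k <= INR m by lra.
  by move=> /INR_le; lia.
have [|] : m = k \/ m = k.+1 by lia.
  by move=> Em; subst m; left; split => //; lra.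
by move=> Em; subst m; right; rewrite S_INR in E; split => //; lra.
Qed.

Lemma INR_shift01_eq {m k : nat} {t s} : INR m + t = INR k + s -> in01 t -> in01 s ->
  [\/ m = k /\ t = s, k = m.+1 /\ t = 1 /\ s = 0 | m = k.+1 /\ t = 0 /\ s = 1].
Proof.
move=> E [t0 t1] [s0 s1].
have mk : (m <= k.+1)%N by apply: INR_le_succ; lra.
have km : (k <= m.+1)%N by apply: INR_le_succ; lra.
have [Em|[Ek|Em]] : m = k \/ k = m.+1 \/ m = k.+1 by lia.
- by subst m; apply: Or31; split => //; lra.
- by subst k; apply: Or32; rewrite S_INR in E; split => //; lra.
- by subst m; apply: Or33; rewrite S_INR in E; split => //; lra.
Qed.

Definition grid_step (ua va ub vb : nat) : Prop :=
  (ub = ua.+1 /\ vb = va) \/ (ub = ua /\ vb = va.+1).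

Lemma grid_step_point {ua va ub vb : nat} (uw vw : nat) {t} : grid_step ua va ub vb -> in01 t ->
  INR uw = INR ua + t * (INR ub - INR ua) -> INR vw = INR va + t * (INR vb - INR va) ->
  (uw = ua /\ vw = va) \/ (uw = ub /\ vw = vb).
Proof.
move=> [[-> ->]|[-> ->]] t01 Eu Ev; rewrite ?S_INR in Eu Ev.
- have -> : vw = va by apply: INR_eq; lra.
  by case: (@INR_shift01 uw ua t ltac:(lra) t01) => [[-> _]|[-> _]]; [left|right].
- have -> : uw = ua by apply: INR_eq; lra.
  by case: (@INR_shift01 vw va t ltac:(lra) t01) => [[-> _]|[-> _]]; [left|right].
Qed.

Lemma grid_steps_meet {ua va ub vb uc vc ud vd : nat} {t s} :
  grid_step ua va ub vb -> grid_step uc vc ud vd -> in01 t -> in01 s ->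
  INR ua + t * (INR ub - INR ua) = INR uc + s * (INR ud - INR uc) ->
  INR va + t * (INR vb - INR va) = INR vc + s * (INR vd - INR vc) ->
  [\/ [/\ ua = uc, va = vc, ub = ud & vb = vd],
      t = 0 /\ ((ua = uc /\ va = vc) \/ (ua = ud /\ va = vd)) |
      t = 1 /\ ((ub = uc /\ vb = vc) \/ (ub = ud /\ vb = vd))].
Proof.
move=> [[-> ->]|[-> ->]] [[-> ->]|[-> ->]] t01 s01 Eu Ev; rewrite ?S_INR in Eu Ev.
- have -> : va = vc by apply: INR_eq; lra.
  case: (@INR_shift01_eq ua uc t s ltac:(lra) t01 s01) => [[-> ->]|[-> [-> _]]|[-> [-> _]]].
  + by apply: Or31.
  + by apply: Or33; split => //; left.
  + by apply: Or32; split => //; right.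
- case: (@INR_shift01 uc ua t ltac:(lra) t01) => [[-> ->]|[-> ->]];
  case: (@INR_shift01 va vc s ltac:(lra) s01) => [[-> _]|[-> _]].
  + by apply: Or32; split => //; left.
  + by apply: Or32; split => //; right.
  + by apply: Or33; split => //; left.
  + by apply: Or33; split => //; right.
- case: (@INR_shift01 ua uc s ltac:(lra) s01) => [[-> _]|[-> _]];
  case: (@INR_shift01 vc va t ltac:(lra) t01) => [[-> ->]|[-> ->]].
  + by apply: Or32; split => //; left.
  + by apply: Or33; split => //; left.
  + by apply: Or32; split => //; right.
  + by apply: Or33; split => //; right.
- have -> : ua = uc by apply: INR_eq; lra.
  case: (@INR_shift01_eq va vc t s ltac:(lra) t01 s01) => [[-> ->]|[-> [-> _]]|[-> [-> _]]].
  + by apply: Or31.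
  + by apply: Or33; split => //; left.
  + by apply: Or32; split => //; right.
Qed.

End Grid.

Section GridDrawing.
Context {disp : Order.disp_t} {D : finTBDistrLatticeType disp}.
Implicit Types (X : {set D}) (x y a b : D).

Definition down X x : {set D} := [set j in X | j <= x].

Lemma down_chain_eq {X x y} : chain X -> #|down X x| = #|down X y| -> down X x = down X y.
Proof.
move=> CX Exy; suff [xy|yx] : down X x \subset down X y \/ down X y \subset down X x.
- by apply/eqP; rewrite eqEcard xy Exy leqnn.
- by apply/eqP; rewrite eq_sym eqEcard yx Exy leqnn.
case: (boolP (down X x \subset down X y)) => [|/subsetPn [j]]; first by left.
rewrite !inE => /andP [jX jx] /nandP [/negP //|jy]; right.
apply/subsetP => k; rewrite !inE => /andP [kX ky]; rewrite kX /=.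
case/orP: (CX j k jX kX) => [jk|]; last by move/le_trans; apply.
by move: jy; rewrite (le_trans jk ky).
Qed.

Variables (C1 C2 : {set D}) (CC1 : chain C1) (CC2 : chain C2) (EJ : Jset = C1 :|: C2).

Let C2' := C2 :\: C1.

Let CC2' : chain C2'.
Proof. by move=> x y; rewrite !inE => /andP [_ xC] /andP [_ yC]; apply: CC2. Qed.

Definition ucoord x := #|down C1 x|.
Definition vcoord x := #|down C2' x|.

Lemma Jbelow_down x : Jbelow x = down C1 x :|: down C2' x.
Proof.
apply/setP => j; rewrite !inE -JsetE EJ inE.
by case: (j \in C1); case: (j \in C2); rewrite /= ?orbF.
Qed.

Lemma card_Jbelow x : #|Jbelow x| = (ucoord x + vcoord x)%N.
Proof.
rewrite Jbelow_down cardsU /ucoord /vcoord (_ : _ :&: _ = set0) ?cards0 ?subn0 //.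
by apply/setP => j; rewrite !inE; case: (j \in C1); rewrite ?andbF.
Qed.

Lemma coord_inj x y : ucoord x = ucoord y -> vcoord x = vcoord y -> x = y.
Proof.
move=> Eu Ev; apply: Jbelow_inj.
by rewrite !Jbelow_down (down_chain_eq CC1 Eu) (down_chain_eq CC2' Ev).
Qed.

Lemma coord_lt x y : x < y -> (ucoord x + vcoord x < ucoord y + vcoord y)%N.
Proof. by move/Jbelow_proper/proper_card; rewrite !card_Jbelow. Qed.

Lemma covers_grid_step a b : covers a b ->
  grid_step (ucoord a) (vcoord a) (ucoord b) (vcoord b).
Proof.
case/covers_Jbelow => j [Jj ja jb Jb].
have down_b X : X \subset Jset -> down X b = if j \in X then j |: down X a else down X a.
  move=> /subsetP XJ; apply/setP => k; case: (eqVneq k j) => [->|kj].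
    by case: ifP => jX; rewrite !inE ?eqxx ?jX ?jb // (negbF jX).
  case: ifP => _; rewrite !inE ?(negbTE kj) /=; case: (boolP (k \in X)) => //= /XJ.
    by rewrite JsetE => /Jb ->; rewrite (negbTE kj) orbF.
  by rewrite JsetE => /Jb ->; rewrite (negbTE kj) orbF.
have C1J : C1 \subset Jset by rewrite EJ subsetUl.
have C2J : C2' \subset Jset by rewrite EJ; apply: subset_trans (subsetDl C2 C1) (subsetUr _ _).
have nja X : j \notin down X a by rewrite inE negb_and ja orbT.
rewrite /ucoord /vcoord (down_b _ C1J) (down_b _ C2J) inE.
have : j \in C1 :|: C2 by rewrite -EJ JsetE.
rewrite inE; case: (j \in C1) => /= [_|jC2]; first by left; rewrite cardsU1 nja.
by right; rewrite jC2 cardsU1 nja.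
Qed.


(* The grid [N^2] turned by 45 degrees, so that both unit steps point upwards. *)
Definition grid_drawing x : R * R :=
  (Rminus (INR (ucoord x)) (INR (vcoord x)), Rplus (INR (ucoord x)) (INR (vcoord x))).

Lemma grid_drawing_planar : planar_drawing grid_drawing.
Proof.
split; [|split; [|split]].
- move=> x y [Eu Ev]; apply: coord_inj; apply: INR_eq; lra.
- move=> x y /coord_lt xy; rewrite /= -!plus_INR; apply: lt_INR; lia.
- move=> w a b t /covers_grid_step ab t01 [Eu Ev].
  by case: (grid_step_point (ucoord w) (vcoord w) ab t01 ltac:(lra) ltac:(lra))
    => [[e1 e2]|[e1 e2]]; [left|right]; apply: coord_inj.
- move=> a b c d t s /covers_grid_step ab /covers_grid_step cd t01 s01 E.
  have [Eu Ev] := E.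
  case: (grid_steps_meet ab cd t01 s01 ltac:(lra) ltac:(lra))
    => [[e1 e2 e3 e4]|[-> H]|[-> H]]; first by left; split; apply: coord_inj.
  + right; exists a; do !split; first by left.
      by case: H => [[e1 e2]|[e1 e2]]; [left|right]; apply: coord_inj.
    by rewrite /grid_drawing /segpt /=; f_equal; ring.
  + right; exists b; do !split; first by right.
      by case: H => [[e1 e2]|[e1 e2]]; [left|right]; apply: coord_inj.
    by rewrite /grid_drawing /segpt /=; f_equal; ring.
Qed.

End GridDrawing.

Lemma width_planar {disp : Order.disp_t} {D : finTBDistrLatticeType disp} :
  width_le2 (Jset : {set D}) -> @planar disp D.
Proof.
case/width_le2_chains => C1 [C2 [CC1 CC2 EJ]].
by exists (grid_drawing C1 C2); apply: grid_drawing_planar.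
Qed.


Lemma chain_representable_trivial {disp : Order.disp_t} {D : finTBDistrLatticeType disp}
  (Q : {set D}) : (\bot : D) = \top -> Jplus \subset Q -> chain_representable Q.
Proof.
move=> bt JQ; have all_bot (x : D) : x = \bot by apply/le_anti; rewrite le0x bt lex1.
exists 0%N, (fun _ => \bot); split; first split => [[]//|x].
  by rewrite JsetE (all_bot x) => /join_irr_neq0; rewrite eqxx.
apply/setP => x; rewrite (all_bot x); apply/idP/idP => _.
  by apply/RepP; exists 0%N, 0%N; rewrite rep_nil.
by apply: (subsetP JQ); rewrite in_Jplus eqxx.
Qed.

Theorem proposition1p5 (disp : Order.disp_t) (D : finTBDistrLatticeType disp) :
  @fully_chain_representable disp D <->
  (@planar disp D /\
   (forall c1 c2 : D, coatom c1 -> join_red c1 -> coatom c2 -> join_red c2 -> c1 = c2)).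
Proof.
split=> [F|[/planar_width W coat_uniq] Q JQ].
  split; first exact/width_planar/fully_chain_representable_width.
  exact: fully_chain_representable_coatoms.
case: (eqVneq (\bot : D) \top) => [bt|nt]; first exact: chain_representable_trivial.
have [s Js sep] := separating_exists nt coat_uniq.
exact: (chain_representable_separating Js sep W JQ).
Qed.
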